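(* Let $A\overset{i}{\to}U\overset{j}{\to}G$ be an extension of a semilattice of groups $A$ by a group $G$, and let $S$ be an inverse semigroup with epimorphisms $\pi:U\to S$, $\kappa:S\to G$ such that $A\overset{i}{\to}U\overset{\pi}{\to}S$ is an extension of $A$ by $S$ and $j=\kappa\circ\pi$ (so that the fibres $\kappa^{-1}(x)$ are exactly the $\sigma$-classes of $S$). Then for $x\in G$, the $\sigma$-class $\kappa^{-1}(x)$ has a maximum element (with respect to the natural partial order of $S$) if and only if $j^{-1}(x)=u_x\,i(A)$ for some $u_x\in j^{-1}(x)$.
   Context: A semilattice of groups is an inverse semigroup whose idempotents are central. An extension of $A$ by a group $G$ is an inverse semigroup $U$ with a monomorphism $i:A\to U$ and an epimorphism $j:U\to G$ with $i(A)=j^{-1}(1)$. An extension of $A$ by an inverse semigroup $S$ is an inverse semigroup $U$ with a monomorphism $i:A\to U$ and an idempotent-separating epimorphism $\pi:U\to S$ with $i(A)=\pi^{-1}(E(S))$. $\sigma$ is the minimum group congruence on $S$ ($(s,t)\in\sigma$ iff $es=et$ for some $e\in E(S)$). *)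

Record InverseSemigroup := {
  carrier :> Type;
  mul : carrier -> carrier -> carrier;
  inv : carrier -> carrier;
  mul_assoc : forall a b c, mul a (mul b c) = mul (mul a b) c;
  inv_unique : forall a b, (mul (mul a b) a = a /\ mul (mul b a) b = b) <-> b = inv a
}.

Arguments mul {_} _ _.
Arguments inv {_} _.

Record Group := {
  gcarrier :> Type;
  gmul : gcarrier -> gcarrier -> gcarrier;
  ginv : gcarrier -> gcarrier;
  gone : gcarrier;
  gmul_assoc : forall a b c, gmul a (gmul b c) = gmul (gmul a b) c;
  gmul1 : forall a, gmul a gone = a;
  g1mul : forall a, gmul gone a = a;
  gmulV : forall a, gmul a (ginv a) = gone;
  gmulVl : forall a, gmul (ginv a) a = gone
}.

Arguments gmul {_} _ _.
Arguments ginv {_} _.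
Arguments gone {_}.

Definition idempotent {S : InverseSemigroup} (e : S) : Prop := mul e e = e.

Definition semilattice_of_groups (S : InverseSemigroup) : Prop :=
  forall e s : S, idempotent e -> mul e s = mul s e.

Definition nat_le {S : InverseSemigroup} (s t : S) : Prop :=
  exists e : S, idempotent e /\ s = mul e t.

Definition is_hom {S T : InverseSemigroup} (f : S -> T) : Prop :=
  forall a b, f (mul a b) = mul (f a) (f b).

Definition is_hom_to_group {S : InverseSemigroup} {G : Group} (f : S -> G) : Prop :=
  forall a b, f (mul a b) = gmul (f a) (f b).

Definition injective {X Y : Type} (f : X -> Y) : Prop := forall x y, f x = f y -> x = y.
Definition surjective {X Y : Type} (f : X -> Y) : Prop := forall y, exists x, f x = y.

Definition idempotent_separating {S T : InverseSemigroup} (f : S -> T) : Prop :=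
  forall e e' : S, idempotent e -> idempotent e' -> f e = f e' -> e = e'.

Definition group_extension (A U : InverseSemigroup) (G : Group)
    (i : A -> U) (j : U -> G) : Prop :=
  is_hom i /\ injective i /\ is_hom_to_group j /\ surjective j /\
  (forall u : U, j u = gone <-> exists a : A, u = i a).

Definition semigroup_extension (A U S : InverseSemigroup)
    (i : A -> U) (pi : U -> S) : Prop :=
  is_hom i /\ injective i /\ is_hom pi /\ surjective pi /\
  idempotent_separating pi /\
  (forall u : U, idempotent (pi u) <-> exists a : A, u = i a).

From Stdlib Require Import Setoid.

(* If m is the maximum of the sigma-class kappa^-1(x) and pi(ux) = m, then for
   u in j^-1(x) the element ux^-1 u lies in ker j = i(A), and ux ux^-1 u = u:
   both sides have image m m^-1 pi(u) = pi(u) because pi(u) <= m, and an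
   idempotent-separating morphism cannot identify an element with a distinct
   element below it. Conversely, if j^-1(x) = ux i(A), every element of
   kappa^-1(x) is pi(ux) f with f idempotent, which lies below pi(ux). *)

Ltac assoc_norm := repeat rewrite mul_assoc.
Ltac assoc_norm_in H := repeat rewrite mul_assoc in H.
(* Rewrites with [l = r] anywhere inside a left-associated product, also when
   the occurrence of [l] is preceded by further factors. *)
Ltac rewrite_assoc H :=
  let H0 := fresh in
  let K := fresh in
  pose proof H as H0; assoc_norm_in H0;
  pose proof (fun c => f_equal (mul c) H0) as K; cbv beta in K;
  repeat setoid_rewrite mul_assoc in K;
  assoc_norm; first [rewrite K | rewrite H0]; clear K H0.

Section InverseSemigroupTheory.
Variable S : InverseSemigroup.
Local Notation "a * b" := (@mul S a b).

Lemma mul_inv_mul (a : S) : a * inv a * a = a.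
Proof. apply (inv_unique S a (inv a)); reflexivity. Qed.

Lemma inv_mul_inv (a : S) : inv a * a * inv a = inv a.
Proof. apply (inv_unique S a (inv a)); reflexivity. Qed.

Lemma eq_inv (a b : S) : a * b * a = a -> b * a * b = b -> b = inv a.
Proof. intros; apply inv_unique; auto. Qed.

Lemma invK (a : S) : inv (inv a) = a.
Proof. symmetry; apply eq_inv; [apply inv_mul_inv | apply mul_inv_mul]. Qed.

Lemma inv_idem (e : S) : idempotent e -> inv e = e.
Proof. intro He; symmetry; apply eq_inv; rewrite He, He; reflexivity. Qed.

(* With x := inv (e f), the element f x e is another inverse of e f, hence
   equals x; this makes x idempotent, and so is e f = inv x. *)
Lemma idem_mul (e f : S) : idempotent e -> idempotent f -> idempotent (e * f).
Proof.
  intros He Hf.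
  set (x := inv (e * f)).
  assert (Hefe : e * f * x * (e * f) = e * f) by apply mul_inv_mul.
  assert (Hxex : x * (e * f) * x = x) by apply inv_mul_inv.
  assoc_norm_in Hefe; assoc_norm_in Hxex.
  assert (Hfxe : f * x * e = x).
  { apply eq_inv.
    - repeat rewrite_assoc Hf; repeat rewrite_assoc He; exact Hefe.
    - repeat rewrite_assoc He; repeat rewrite_assoc Hf; rewrite_assoc Hxex; reflexivity. }
  assert (Hx : idempotent x).
  { unfold idempotent; rewrite <- Hfxe at 1 2; rewrite_assoc Hxex; exact Hfxe. }
  rewrite <- (invK (e * f)); fold x; rewrite (inv_idem x Hx); exact Hx.
Qed.

Lemma idem_mulC (e f : S) : idempotent e -> idempotent f -> e * f = f * e.
Proof.
  intros He Hf.
  pose proof (idem_mul e f He Hf) as Hef; pose proof (idem_mul f e Hf He) as Hfe.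
  rewrite <- (inv_idem (e * f) Hef); symmetry; apply eq_inv;
    unfold idempotent in Hef, Hfe; assoc_norm_in Hef; assoc_norm_in Hfe.
  - repeat rewrite_assoc Hf; repeat rewrite_assoc He; exact Hef.
  - repeat rewrite_assoc He; repeat rewrite_assoc Hf; exact Hfe.
Qed.

Lemma idem_mul_inv (a : S) : idempotent (a * inv a).
Proof. unfold idempotent; rewrite_assoc (mul_inv_mul a); reflexivity. Qed.

Lemma idem_inv_mul (a : S) : idempotent (inv a * a).
Proof. unfold idempotent; rewrite_assoc (inv_mul_inv a); reflexivity. Qed.

Lemma invM (a b : S) : inv (a * b) = inv b * inv a.
Proof.
  symmetry; apply eq_inv.
  - rewrite_assoc (idem_mulC _ _ (idem_mul_inv b) (idem_inv_mul a)).
    rewrite_assoc (mul_inv_mul a); rewrite_assoc (mul_inv_mul b); reflexivity.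
  - rewrite_assoc (idem_mulC _ _ (idem_inv_mul a) (idem_mul_inv b)).
    rewrite_assoc (inv_mul_inv b); rewrite_assoc (inv_mul_inv a); reflexivity.
Qed.

(* s f = (s f s^-1) s, since f commutes with the idempotent s^-1 s. *)
Lemma nat_le_mul_idem (s f : S) : idempotent f -> nat_le (s * f) s.
Proof.
  intro Hf.
  pose proof (idem_mulC _ _ Hf (idem_inv_mul s)) as Hcomm.
  exists (s * f * inv s); split.
  - unfold idempotent; rewrite_assoc Hcomm.
    rewrite_assoc (mul_inv_mul s); rewrite_assoc Hf; reflexivity.
  - rewrite_assoc Hcomm; rewrite_assoc (mul_inv_mul s); reflexivity.
Qed.

Lemma nat_le_range (s t : S) : nat_le s t -> t * inv t * s = s.
Proof.
  intros [e [He ->]].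
  rewrite_assoc (idem_mulC _ _ (idem_mul_inv t) He).
  rewrite_assoc (mul_inv_mul t); reflexivity.
Qed.

Lemma idem_mul_eq_of_range (e u : S) :
  idempotent e -> (e * u) * inv (e * u) = u * inv u -> e * u = u.
Proof.
  intros He Hrange.
  rewrite <- (mul_inv_mul u) at 2; rewrite <- Hrange, invM, (inv_idem e He).
  rewrite_assoc (idem_mulC _ _ (idem_mul_inv u) He).
  rewrite_assoc He; rewrite_assoc (mul_inv_mul u); reflexivity.
Qed.

End InverseSemigroupTheory.

Lemma hom_inv {S T : InverseSemigroup} (f : S -> T) :
  is_hom f -> forall a, f (inv a) = inv (f a).
Proof.
  intros Hf a; apply eq_inv; rewrite <- !Hf;
    [rewrite mul_inv_mul | rewrite inv_mul_inv]; reflexivity.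
Qed.

Lemma idem_separating_fix {S T : InverseSemigroup} (pi : S -> T) :
  is_hom pi -> idempotent_separating pi ->
  forall e u : S, idempotent e -> pi (mul e u) = pi u -> mul e u = u.
Proof.
  intros Hpi Hsep e u He Hpu.
  apply idem_mul_eq_of_range; [exact He |].
  apply Hsep; try apply idem_mul_inv.
  rewrite (Hpi (mul e u)), (Hpi u), !(hom_inv pi Hpi), Hpu; reflexivity.
Qed.

Lemma ginv_unique (G : Group) (g h : G) : gmul (gmul g h) g = g -> h = ginv g.
Proof.
  intro H.
  transitivity (gmul (gmul (ginv g) (gmul (gmul g h) g)) (ginv g)).
  - rewrite !gmul_assoc, gmulVl, g1mul, <- (gmul_assoc _ h g), gmulV, gmul1; reflexivity.
  - rewrite H, gmulVl, g1mul; reflexivity.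
Qed.

Lemma ghom_inv {S : InverseSemigroup} {G : Group} (j : S -> G) :
  is_hom_to_group j -> forall a, j (inv a) = ginv (j a).
Proof. intros Hj a; apply ginv_unique; rewrite <- !Hj, mul_inv_mul; reflexivity. Qed.

Section MaximumOfSigmaClass.
Variables (A U S : InverseSemigroup) (G : Group).
Variables (i : A -> U) (j : U -> G) (pi : U -> S) (kappa : S -> G).
Hypotheses (pi_hom : is_hom pi) (pi_surj : surjective pi).
Hypothesis pi_idem_sep : idempotent_separating pi.
Hypothesis pi_i_idem : forall a, idempotent (pi (i a)).
Hypothesis j_hom : is_hom_to_group j.
Hypothesis j_ker : forall u, j u = gone -> exists a, u = i a.
Hypothesis j_i : forall a, j (i a) = gone.
Hypothesis j_pi : forall u, j u = kappa (pi u).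
Variable x : G.

Lemma coset_of_max_sigma_class (m : S) :
  kappa m = x -> (forall s, kappa s = x -> nat_le s m) ->
  exists ux, j ux = x /\ forall u, j u = x <-> exists a, u = mul ux (i a).
Proof.
  intros Hm Hmax.
  destruct (pi_surj m) as [ux Hux].
  assert (Hjux : j ux = x) by (rewrite j_pi, Hux; exact Hm).
  exists ux; split; [exact Hjux |]; intro u; split.
  - intro Hu.
    destruct (j_ker (mul (inv ux) u)) as [a Ha].
    { rewrite j_hom, (ghom_inv j j_hom), Hjux, Hu, gmulVl; reflexivity. }
    exists a; rewrite <- Ha, mul_assoc; symmetry.
    apply (idem_separating_fix pi pi_hom pi_idem_sep); [apply idem_mul_inv |].
    rewrite !pi_hom, (hom_inv pi pi_hom), Hux.
    apply nat_le_range, Hmax; rewrite <- j_pi; exact Hu.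
  - intros [a ->]; rewrite j_hom, j_i, Hjux, gmul1; reflexivity.
Qed.

Lemma max_sigma_class_of_coset (ux : U) :
  j ux = x -> (forall u, j u = x -> exists a, u = mul ux (i a)) ->
  exists m, kappa m = x /\ forall s, kappa s = x -> nat_le s m.
Proof.
  intros Hux Hcoset.
  exists (pi ux); split; [rewrite <- j_pi; exact Hux |].
  intros s Hs; destruct (pi_surj s) as [u <-].
  destruct (Hcoset u) as [a ->]; [rewrite j_pi; exact Hs |].
  rewrite pi_hom; apply nat_le_mul_idem, pi_i_idem.
Qed.

End MaximumOfSigmaClass.

Theorem proposition4p8 (A U S : InverseSemigroup) (G : Group)
    (i : A -> U) (j : U -> G) (pi : U -> S) (kappa : S -> G) :
  semilattice_of_groups A ->
  group_extension A U G i j ->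
  semigroup_extension A U S i pi ->
  is_hom_to_group kappa -> surjective kappa ->
  (forall u : U, j u = kappa (pi u)) ->
  forall x : G,
    (exists m : S, kappa m = x /\ forall s : S, kappa s = x -> nat_le s m) <->
    (exists ux : U, j ux = x /\
       forall u : U, j u = x <-> exists a : A, u = mul ux (i a)).
Proof.
  intros _ [_ [_ [j_hom [_ j_ker]]]] [_ [_ [pi_hom [pi_surj [pi_idem_sep pi_idem]]]]]
    _ _ j_pi x.
  assert (j_i : forall a, j (i a) = gone) by (intro a; apply j_ker; exists a; reflexivity).
  assert (pi_i_idem : forall a, idempotent (pi (i a))) by (intro a; apply pi_idem; exists a; reflexivity).
  split.
  - intros [m [Hm Hmax]].
    exact (coset_of_max_sigma_class A U S G i j pi kappa pi_hom pi_surj pi_idem_sep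
             j_hom (fun u Hu => proj1 (j_ker u) Hu) j_i j_pi x m Hm Hmax).
  - intros [ux [Hux Hcoset]].
    exact (max_sigma_class_of_coset A U S G i j pi kappa pi_hom pi_surj pi_i_idem
             j_pi x ux Hux (fun u Hu => proj1 (Hcoset u) Hu)).
Qed.
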